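(* Let $r\ge1$ and let $p_1,p_2,\ldots,p_r$ be primes, each $\ge5$ (not necessarily distinct). Then for every $n\ge0$, \[ b_2\!\left(\prod_{s=1}^{r-1}p_s^2\,p_{r}\, n+\frac{(24j+1)\prod_{s=1}^{r-1}p_s^2-1}{24}\right)\equiv 0 \pmod 2 \] for every integer $j$ with $0\le j\le p_r-1$ and $\left(\frac{24j+1}{p_r}\right)=-1$ (with the empty product equal to $1$).
   Context: For a positive integer $\ell$, $b_\ell(n)$ denotes the number of partitions of $n$ having no part divisible by $\ell$. $\left(\frac{a}{p}\right)$ is the Legendre symbol. *)

From mathcomp Require Import all_boot all_algebra.
Set Implicit Arguments. Unset Strict Implicit. Unset Printing Implicit Defensive.

(* A partition of n is encoded by its multiplicity function: f i is the
   number of parts equal to i.+1 (parts range over 1..n, multiplicities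
   over 0..n). *)
Definition is_partition_mult (n : nat) (f : {ffun 'I_n -> 'I_n.+1}) : bool :=
  \sum_(i < n) i.+1 * f i == n.

Definition b (l n : nat) : nat :=
  #|[set f : {ffun 'I_n -> 'I_n.+1} | is_partition_mult f &&
      [forall i : 'I_n, (l %| i.+1) ==> (val (f i) == 0)]]|.

Definition legendre (a p : nat) : int :=
  if p %| a then 0%R
  else if [exists x : 'I_p, (x ^ 2) %% p == a %% p] then 1%R
  else (-1)%R.

From mathcomp Require Import all_boot all_algebra.
From mathcomp Require Import zify ring.
Set Implicit Arguments. Unset Strict Implicit. Unset Printing Implicit Defensive.

(* By Glaisher's identity, b_2(N) is the number of partitions of N into
   distinct parts; we compare the coefficients of x^N in the truncated products
   \prod (1 + x^k) and \prod_(k odd) 1 / (1 - x^k).  Franklin's involution on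
   distinct partitions of N has a fixed point only when N is pentagonal, that is
   when 24 N + 1 is a square, so otherwise b_2(N) is even.  For the argument N
   of the theorem, 24 N + 1 = P (24 p_r n + 24 j + 1) where P is a square
   congruent to 1 mod 24; were this a square, 24 j + 1 would be a square
   modulo p_r, contradicting (24 j + 1 / p_r) = -1. *)

Definition first_upto (P : pred nat) (B : nat) := find P (iota 0 B.+1).

Definition last_upto (P : pred nat) (B : nat) :=
  B - find (fun d => P (B - d)) (iota 0 B.+1).

Lemma first_uptoP (P : pred nat) B x : x <= B -> P x ->
  [/\ first_upto P B <= x, P (first_upto P B)
    & forall y, y < first_upto P B -> ~~ P y].
Proof.
move=> xB Px; rewrite /first_upto.
have hasP : has P (iota 0 B.+1) by apply/hasP; exists x; rewrite ?mem_iota; lia.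
have lt_find : find P (iota 0 B.+1) < B.+1 by move: hasP; rewrite has_find size_iota.
have before y : y < find P (iota 0 B.+1) -> ~~ P y.
  by move=> lt; have := before_find 0 lt; rewrite nth_iota ?add0n => [->|]; lia.
split => //; last by have := nth_find 0 hasP; rewrite nth_iota ?add0n.
by rewrite leqNgt; apply/negP => /before; rewrite Px.
Qed.

Lemma last_uptoP (P : pred nat) B x : x <= B -> P x ->
  [/\ last_upto P B <= B, P (last_upto P B)
    & forall y, last_upto P B < y <= B -> ~~ P y].
Proof.
move=> xB Px; rewrite /last_upto; set d := find _ _.
have hasP : has (fun d => P (B - d)) (iota 0 B.+1).
  by apply/hasP; exists (B - x); rewrite ?subKn ?mem_iota //; lia.
have lt_d : d < B.+1 by move: hasP; rewrite has_find size_iota.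
split; first exact: leq_subr.
  by have := nth_find 0 hasP; rewrite -/d (nth_iota _ _ lt_d) add0n.
move=> y /andP[lty leyB]; have lt : B - y < d by lia.
have := before_find 0 lt; rewrite nth_iota; last lia.
by rewrite add0n subKn // => ->.
Qed.

Lemma last_upto_eq (P : pred nat) B a : a <= B -> P a ->
  (forall y, a < y <= B -> ~~ P y) -> last_upto P B = a.
Proof.
move=> aB Pa after_a; have [leB Plast after_last] := last_uptoP aB Pa.
apply/eqP; rewrite eqn_leq; apply/andP; split; rewrite leqNgt; apply/negP => lt.
  by move: (after_a (last_upto P B)); rewrite lt leB Plast => /(_ isT).
by move: (after_last a); rewrite lt aB Pa => /(_ isT).
Qed.

Section DistinctPartitions.

Variable N : nat.
Local Notation dpart := {ffun 'I_N -> bool}.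

Definition is_part (g : dpart) (x : nat) := [exists i : 'I_N, g i && (i.+1 == x)].

Definition dpart_of (P : pred nat) : dpart := [ffun i : 'I_N => P i.+1].

Definition weight (g : dpart) := \sum_(i < N) i.+1 * g i.

Lemma is_part_ord g (i : 'I_N) : is_part g i.+1 = g i.
Proof.
apply/existsP/idP => [[k /andP[gk /eqP [ik]]]|gi]; last by exists i; rewrite gi eqxx.
by rewrite (_ : i = k) //; apply/val_inj.
Qed.

Lemma is_part_range g x : is_part g x -> 0 < x <= N.
Proof. by case/existsP => k /andP[_ /eqP <-]; rewrite ltn_ord. Qed.

Lemma is_part_rangeE g x : is_part g x && (0 < x <= N) = is_part g x.
Proof. by case gx: (is_part g x) => //=; apply: is_part_range gx. Qed.

Lemma is_part_dpart_of P x : is_part (dpart_of P) x = P x && (0 < x <= N).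
Proof.
case: x => [|x]; first by rewrite andbF; apply/negbTE/negP => /is_part_range.
case: (ltnP x N) => [lt|ge].
  by rewrite (is_part_ord _ (Ordinal lt)) ffunE /= andbT.
by rewrite !andbF; apply/negbTE/negP => /is_part_range; lia.
Qed.

Lemma dpart_ext g h : is_part g =1 is_part h -> g = h.
Proof. by move=> e; apply/ffunP => i; rewrite -!is_part_ord e. Qed.

Lemma weightE g : weight g = \sum_(x < N.+1) x * is_part g x.
Proof.
rewrite big_ord_recl mul0n add0n; apply: eq_bigr => i _.
by rewrite /bump /= is_part_ord.
Qed.

Lemma sum_indicator a : a <= N -> \sum_(x < N.+1) x * (val x == a) = a.
Proof.
move=> aN; rewrite (bigD1 (Ordinal (aN : a < N.+1))) //= eqxx muln1 big1 ?addn0 //.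
by move=> i /negPf ia; rewrite -val_eqE /= in ia; rewrite ia muln0.
Qed.

Lemma weight_ge_two_parts g a c : is_part g a -> is_part g c -> a != c ->
  a + c <= weight g.
Proof.
move=> ga gc ac; have /andP[_ aN] := is_part_range ga.
have /andP[_ cN] := is_part_range gc.
rewrite weightE -(sum_indicator aN) -(sum_indicator cN) -big_split /=.
apply: leq_sum => x _; rewrite -mulnDr leq_mul2l; apply/orP; right.
have [->|_] := eqVneq (val x) a; first by rewrite (negbTE ac) ga.
by have [->|_] := eqVneq (val x) c; rewrite ?gc.
Qed.

Lemma weight_exchange g h a b c : a <= N -> b <= N -> c <= N ->
  (forall y, y <= N -> is_part h y + (y == a) + (y == b) = is_part g y + (y == c)) ->
  weight h + a + b = weight g + c.
Proof.
move=> aN bN cN exch; rewrite !weightE -(sum_indicator aN) -(sum_indicator bN).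
rewrite -(sum_indicator cN) -!big_split; apply: eq_bigr => x _ /=.
by rewrite -!mulnDr exch // -ltnS.
Qed.

End DistinctPartitions.

Section Franklin.

Variable N : nat.
Local Notation dpart := {ffun 'I_N -> bool}.

Definition smallest (g : dpart) := first_upto (is_part g) N.
Definition largest (g : dpart) := last_upto (is_part g) N.

(* The slope of [g] is the run of consecutive parts (slope_base g, largest g]. *)
Definition slope_base (g : dpart) := last_upto (fun x => ~~ is_part g x) (largest g).-1.

(* Franklin's two moves: add one to each of the [smallest g] largest parts
   and drop the smallest part, or subtract one from each part of the slope
   and add a new part equal to the length of the slope. *)
Definition raise_slope (g : dpart) := dpart_of N (fun x =>
  is_part g x && (x != smallest g) && (x != largest g - smallest g + 1)
  || (x == (largest g).+1)).

Definition lower_slope (g : dpart) := dpart_of N (fun x =>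
  is_part g x && (x != largest g) || (x == slope_base g)
  || (x == largest g - slope_base g)).

(* The two shapes left fixed are the pentagonal partitions. *)
Definition franklin_step (g : dpart) :=
  if smallest g <= largest g - slope_base g then
    (if ((slope_base g).+1 == smallest g) && (smallest g == largest g - slope_base g)
     then g else raise_slope g)
  else
    (if ((slope_base g).+1 == smallest g) && (smallest g == (largest g - slope_base g).+1)
     then g else lower_slope g).

Definition franklin (g : dpart) := if [exists i, g i] then franklin_step g else g.

Section Shape.

Variables (g : dpart) (x0 : nat).
Hypothesis g_x0 : is_part g x0.

Lemma franklin_nonempty : franklin g = franklin_step g.
Proof.
rewrite /franklin; case: existsP => // -[].
by case/existsP: g_x0 => i /andP[gi _]; exists i.
Qed.

Let x0_le_N : x0 <= N. Proof. by case/andP: (is_part_range g_x0). Qed.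

Lemma smallest_part : is_part g (smallest g).
Proof. by case: (first_uptoP x0_le_N g_x0). Qed.

Lemma smallest_min y : y < smallest g -> ~~ is_part g y.
Proof. by case: (first_uptoP x0_le_N g_x0) => _ _; apply. Qed.

Lemma largest_part : is_part g (largest g).
Proof. by case: (last_uptoP x0_le_N g_x0). Qed.

Lemma largest_max y : largest g < y -> ~~ is_part g y.
Proof.
move=> lt; case: (leqP y N) => yN; last by apply/negP => /is_part_range; lia.
by case: (last_uptoP x0_le_N g_x0) => _ _; apply; rewrite lt.
Qed.

Lemma smallest_range : 0 < smallest g <= largest g.
Proof.
case/andP: (is_part_range smallest_part) => -> _ /=.
by rewrite leqNgt; apply/negP => /smallest_min; rewrite largest_part.
Qed.

Lemma largest_range : 0 < largest g <= N.
Proof. exact: is_part_range largest_part. Qed.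

Lemma slope_baseP : [/\ slope_base g < largest g, ~~ is_part g (slope_base g)
   & forall y, slope_base g < y <= largest g -> is_part g y].
Proof.
have not0 : ~~ is_part g 0 by apply/negP => /is_part_range.
have /andP[M_gt0 _] := largest_range.
have [le_base base_not after_base] :=
  @last_uptoP (fun x => ~~ is_part g x) (largest g).-1 0 (leq0n _) not0.
rewrite /slope_base; split => //; first lia.
move=> y /andP[base_y yM]; have [->|neM] := eqVneq y (largest g).
  exact: largest_part.
by have := after_base y; rewrite negbK; apply; lia.
Qed.

Lemma smallest_le_slope_base : smallest g <= (slope_base g).+1.
Proof.
have [baseM _ slope] := slope_baseP; have /andP[s_gt0 sM] := smallest_range.
rewrite leqNgt; apply/negP => lt.
by have := smallest_min (_ : (smallest g).-1 < smallest g); rewrite slope; lia.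
Qed.

End Shape.

Lemma smallest_eq (g : dpart) a : is_part g a ->
  (forall y, y < a -> ~~ is_part g y) -> smallest g = a.
Proof.
move=> ga before_a; apply/eqP; rewrite eqn_leq; apply/andP; split.
  by rewrite leqNgt; apply/negP => /(smallest_min ga); rewrite ga.
by rewrite leqNgt; apply/negP => /before_a; rewrite (smallest_part ga).
Qed.

Lemma largest_eq (g : dpart) a : is_part g a ->
  (forall y, a < y -> ~~ is_part g y) -> largest g = a.
Proof.
move=> ga after_a; apply/eqP; rewrite eqn_leq; apply/andP; split.
  by rewrite leqNgt; apply/negP => /after_a; rewrite (largest_part ga).
by rewrite leqNgt; apply/negP => /(largest_max ga); rewrite ga.
Qed.

Lemma slope_base_eq (g : dpart) a : a < largest g -> ~~ is_part g a ->
  (forall y, a < y < largest g -> is_part g y) -> slope_base g = a.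
Proof.
move=> aM ga slope; apply: last_upto_eq => //; first lia.
by move=> y /andP[ay yM]; rewrite negbK; apply: slope; lia.
Qed.

Section RaiseSlope.

Variables (g : dpart) (x0 : nat).
Hypotheses (g_x0 : is_part g x0) (weight_g : weight g = N).
Local Notation s := (smallest g).
Local Notation M := (largest g).
Local Notation b := (slope_base g).
Hypotheses (small_le_slope : s <= M - b)
  (not_pentagonal : ~~ ((b.+1 == s) && (s == M - b))).

Let s_part := smallest_part g_x0.
Let s_min := smallest_min g_x0.
Let M_part := largest_part g_x0.
Let M_max := largest_max g_x0.
Let s_range := smallest_range g_x0.
Let M_range := largest_range g_x0.
Let b_facts := slope_baseP g_x0.

Let raised_part : is_part g (M - s + 1).
Proof. by case: b_facts => _ _; apply; case/andP: s_range; lia. Qed.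

Let smallest_lt_raised : s < M - s + 1.
Proof.
have : s <= M - s + 1 by rewrite leqNgt; apply/negP => /s_min; rewrite raised_part.
by case/nandP: not_pentagonal => /eqP; have := smallest_le_slope_base g_x0; lia.
Qed.

Let room_above : M.+1 <= N.
Proof.
have ne : s != M by apply/eqP; case/andP: s_range; lia.
by have := weight_ge_two_parts s_part M_part ne; case/andP: s_range; lia.
Qed.

Lemma is_part_raise_slope y : is_part (raise_slope g) y =
  (is_part g y && (y != s) && (y != M - s + 1)) || (y == M.+1).
Proof.
rewrite is_part_dpart_of; have [->|yM] := eqVneq y M.+1; first by rewrite orbT /=; lia.
rewrite !orbF; case gy: (is_part g y) => //=.
by rewrite (is_part_range gy) andbT.
Qed.

Lemma weight_raise_slope : weight (raise_slope g) = N.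
Proof.
have exch y : y <= N -> is_part (raise_slope g) y + (y == s) + (y == M - s + 1)
                        = is_part g y + (y == M.+1).
  move=> yN; rewrite is_part_raise_slope.
  have [->|ys] := eqVneq y s; first by rewrite s_part; lia.
  have [->|yr] := eqVneq y (M - s + 1); first by rewrite raised_part; lia.
  have [->|yM] := eqVneq y M.+1; last by rewrite !andbT orbF !addn0.
  by rewrite (negbTE (M_max _)).
have := weight_exchange (_ : s <= N) (_ : M - s + 1 <= N) room_above exch.
by case/andP: M_range; lia.
Qed.

Lemma raise_slope_neq : raise_slope g != g.
Proof.
apply/negP => /eqP e; have := is_part_raise_slope s.
by rewrite e s_part eqxx /= => /esym/eqP; lia.
Qed.

Lemma raise_slope_top : is_part (raise_slope g) M.+1.
Proof. by rewrite is_part_raise_slope eqxx orbT. Qed.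

Lemma largest_raise_slope : largest (raise_slope g) = M.+1.
Proof.
apply: largest_eq => [|y lt]; first exact: raise_slope_top.
by rewrite is_part_raise_slope (negbTE (M_max _)) //; lia.
Qed.

Lemma slope_base_raise_slope : slope_base (raise_slope g) = M - s + 1.
Proof.
apply: slope_base_eq; rewrite ?largest_raise_slope; first lia.
  by rewrite is_part_raise_slope eqxx andbF /=; apply/eqP; lia.
move=> y /andP[l1 l2]; rewrite is_part_raise_slope.
have gy : is_part g y by case: b_facts => _ _; apply; lia.
by rewrite gy /=; apply/orP; left; apply/andP; split; apply/eqP; lia.
Qed.

Lemma smallest_raise_slope : s < smallest (raise_slope g).
Proof.
have := smallest_part raise_slope_top; rewrite is_part_raise_slope orbC.
case/orP => [/eqP -> |/andP[/andP[gy ys] _]]; first lia.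
by rewrite ltn_neqAle eq_sym ys leqNgt; apply/negP => /s_min; rewrite gy.
Qed.

Lemma franklin_raise_slope : franklin (raise_slope g) = g.
Proof.
have new_s := smallest_raise_slope.
rewrite (franklin_nonempty raise_slope_top) /franklin_step.
rewrite largest_raise_slope slope_base_raise_slope.
rewrite ifF; last by apply/negbTE; rewrite -ltnNge; lia.
rewrite ifF; last by apply/negbTE/negP => /andP[/eqP ? /eqP ?]; lia.
apply: dpart_ext => y; rewrite is_part_dpart_of largest_raise_slope.
rewrite slope_base_raise_slope is_part_raise_slope (_ : M.+1 - (M - s + 1) = s); last lia.
have [->|yM] := eqVneq y M.+1.
  rewrite (negbTE (M_max _)) // andbF /=.
  by apply/negbTE/negP => /andP[/orP[] /eqP ? _]; lia.
have [->|yr] := eqVneq y (M - s + 1); first by rewrite orbT raised_part /=; lia.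
have [->|ys] := eqVneq y s; first by rewrite !orbT s_part /=; lia.
by rewrite !orbF !andbT is_part_rangeE.
Qed.

End RaiseSlope.

Section LowerSlope.

Variables (g : dpart) (x0 : nat).
Hypotheses (g_x0 : is_part g x0) (weight_g : weight g = N).
Local Notation s := (smallest g).
Local Notation M := (largest g).
Local Notation b := (slope_base g).
Hypotheses (slope_lt_small : M - b < s)
  (not_pentagonal : ~~ ((b.+1 == s) && (s == (M - b).+1))).

Let s_min := smallest_min g_x0.
Let M_part := largest_part g_x0.
Let M_max := largest_max g_x0.
Let s_range := smallest_range g_x0.
Let M_range := largest_range g_x0.
Let b_facts := slope_baseP g_x0.

Let base_gt0 : 0 < b.
Proof. by case/andP: s_range; case: b_facts; lia. Qed.

Let slope_lt_base : M - b < b.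
Proof.
have := smallest_le_slope_base g_x0.
by case/nandP: not_pentagonal => /eqP; case: b_facts; lia.
Qed.

Let slope_not_part : ~~ is_part g (M - b).
Proof. exact: s_min. Qed.

Lemma is_part_lower_slope y : is_part (lower_slope g) y =
  (is_part g y && (y != M)) || (y == b) || (y == M - b).
Proof.
rewrite is_part_dpart_of; have [->|yb] := eqVneq y b.
  by rewrite orbT /=; case: b_facts; case/andP: M_range; lia.
have [->|yl] := eqVneq y (M - b).
  by rewrite orbT /=; case: b_facts; case/andP: M_range; lia.
rewrite !orbF; case gy: (is_part g y) => //=.
by rewrite (is_part_range gy) andbT.
Qed.

Lemma weight_lower_slope : weight (lower_slope g) = N.
Proof.
have exch y : y <= N -> is_part g y + (y == b) + (y == M - b)
                        = is_part (lower_slope g) y + (y == M).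
  move=> yN; rewrite is_part_lower_slope.
  have [->|yb] := eqVneq y b.
    have [bM b_not _] := b_facts; rewrite (negbTE b_not) orbT.
    have /negbTE -> : b != M - b by have := slope_lt_base; lia.
    by have /negbTE -> : b != M by lia.
  have [->|yl] := eqVneq y (M - b); first by rewrite (negbTE slope_not_part); lia.
  have [->|yM] := eqVneq y M; first by rewrite M_part.
  by rewrite !orbF andbT !addn0.
have := weight_exchange (_ : b <= N) (_ : M - b <= N) (_ : M <= N) exch.
by case/andP: M_range; case: b_facts; lia.
Qed.

Lemma lower_slope_neq : lower_slope g != g.
Proof.
apply/negP => /eqP e; have := is_part_lower_slope M.
rewrite e M_part eqxx /= => /esym/orP[] /eqP; have := base_gt0; case: b_facts; lia.
Qed.

Lemma lower_slope_bottom : is_part (lower_slope g) (M - b).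
Proof. by rewrite is_part_lower_slope eqxx !orbT. Qed.

Lemma smallest_lower_slope : smallest (lower_slope g) = M - b.
Proof.
apply: smallest_eq => [|y lt]; first exact: lower_slope_bottom.
rewrite is_part_lower_slope (negbTE (s_min _)); last lia.
by rewrite /=; apply/norP; split; apply/eqP; have := slope_lt_base; lia.
Qed.

Lemma largest_lower_slope : largest (lower_slope g) = M.-1.
Proof.
have [bM b_not slope] := b_facts; have lt_b := slope_lt_base.
apply: largest_eq => [|y lt]; rewrite is_part_lower_slope.
  have [->|Mb] := eqVneq M.-1 b; first by rewrite ?eqxx orbT.
  by rewrite slope /=; [apply/orP; left; apply/eqP|]; lia.
have [->|yM] := eqVneq y M; first by rewrite andbF /=; apply/norP; split; apply/eqP; lia.
by rewrite (negbTE (M_max _)) /=; [apply/norP; split; apply/eqP|]; lia.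
Qed.

Lemma slope_base_lower_slope : slope_base (lower_slope g) < b.
Proof.
have [bM b_not slope] := b_facts.
have [new_lt new_not _] := slope_baseP lower_slope_bottom.
rewrite largest_lower_slope in new_lt.
rewrite ltnNge; apply/negP => le; move: new_not; rewrite is_part_lower_slope.
have [->|nb] := eqVneq (slope_base (lower_slope g)) b; first by rewrite ?eqxx orbT.
by rewrite slope /=; [apply/eqP|]; lia.
Qed.

Lemma franklin_lower_slope : franklin (lower_slope g) = g.
Proof.
have [bM b_not _] := b_facts; have /andP[M_gt0 MN] := M_range.
have lt_b := slope_lt_base; have new_b := slope_base_lower_slope.
rewrite (franklin_nonempty lower_slope_bottom) /franklin_step.
rewrite smallest_lower_slope largest_lower_slope ifT; last lia.
rewrite ifF; last by apply/negbTE/negP => /andP[/eqP ? /eqP ?]; lia.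
apply: dpart_ext => y; rewrite is_part_dpart_of smallest_lower_slope largest_lower_slope.
rewrite is_part_lower_slope (_ : M.-1 - (M - b) + 1 = b) ?prednK; try lia.
have [->|yM] := eqVneq y M; first by rewrite M_part /=; lia.
have [->|yb] := eqVneq y b; first by rewrite (negbTE b_not) andbF.
have [->|yl] := eqVneq y (M - b); first by rewrite (negbTE slope_not_part) !andbF.
by rewrite !orbF !andbT is_part_rangeE.
Qed.

End LowerSlope.

End Franklin.

Lemma double_sum_nat_interval s M : s <= M.+1 ->
  2 * (\sum_(s <= x < M.+1) x) + s * s.-1 = M.+1 * M.
Proof.
elim: M => [|M IH] le_s.
  by case: s le_s => [|[|]] // _; rewrite ?big_nat1 ?big_geq.
have [->|lt_s] := eqVneq s M.+2; first by rewrite big_geq.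
have le_s' : s <= M.+1 by lia.
by rewrite big_nat_recr //=; move: (IH le_s'); lia.
Qed.

Lemma weight_interval N (g : {ffun 'I_N -> bool}) s M : M <= N ->
  (forall y, is_part g y = (s <= y <= M)) -> weight g = \sum_(s <= x < M.+1) x.
Proof.
move=> MN parts; rewrite weightE.
rewrite (big_nat_widenl s 0 _ _ _ (leq0n s)) (big_nat_widen 0 M.+1 N.+1) //.
rewrite big_mkord [RHS]big_mkcond.
by apply: eq_bigr => x _ /=; rewrite parts ltnS; case: (_ && _); rewrite ?muln1 ?muln0.
Qed.

Lemma franklin_fixed_pentagonal N (g : {ffun 'I_N -> bool}) x0 :
  is_part g x0 -> weight g = N -> (slope_base g).+1 = smallest g ->
  smallest g = largest g - slope_base g \/ smallest g = (largest g - slope_base g).+1 ->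
  exists m, 24 * N + 1 = m ^ 2.
Proof.
move=> g_x0 weight_g base_s shape.
have /andP[s_gt0 sM] := smallest_range g_x0; have /andP[_ MN] := largest_range g_x0.
have [bM _ slope] := slope_baseP g_x0.
have parts y : is_part g y = (smallest g <= y <= largest g).
  apply/idP/andP => [gy|[sy yM]]; last by apply: slope; lia.
  split; rewrite leqNgt; apply/negP.
    by move=> /(smallest_min g_x0); rewrite gy.
  by move=> /(largest_max g_x0); rewrite gy.
have := double_sum_nat_interval (_ : smallest g <= (largest g).+1).
rewrite -(weight_interval MN parts) weight_g => /(_ (leqW sM)).
move: (smallest g) (largest g) (slope_base g) base_s shape s_gt0.
move=> s M b <- shape s_gt0 sum.
by case: shape => shape; [exists (6 * b.+1 - 1) | exists (6 * b.+1 - 5)]; nia.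
Qed.

Lemma franklinP N (g : {ffun 'I_N -> bool}) : weight g = N ->
  [/\ weight (franklin g) = N, franklin (franklin g) = g
    & franklin g = g -> exists m, 24 * N + 1 = m ^ 2].
Proof.
move=> weight_g; have [/existsP[i gi]|empty] := boolP [exists i, g i]; last first.
  have weight0 : weight g = 0.
    rewrite /weight big1 // => i _; move: empty; rewrite negb_exists.
    by move=> /forallP/(_ i)/negbTE ->; rewrite muln0.
  have fixed : franklin g = g by rewrite /franklin (negbTE empty).
  by rewrite fixed; split=> // _; exists 1; lia.
have g_i : is_part g i.+1 by rewrite is_part_ord.
have := franklin_nonempty g_i; rewrite /franklin_step.
case: ifP => [small_le|/negbT small_gt];
  case: ifP => [pent|/negbT not_pent] fE; rewrite !fE.
- have /andP[/eqP ? /eqP ?] := pent.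
  by split=> // _; apply: (franklin_fixed_pentagonal g_i); [| |left].
- split; [exact: (weight_raise_slope g_i) | exact: (franklin_raise_slope g_i) |].
  by move=> e; have := raise_slope_neq g_i weight_g small_le not_pent; rewrite e eqxx.
- have /andP[/eqP ? /eqP ?] := pent.
  by split=> // _; apply: (franklin_fixed_pentagonal g_i); [| |right].
- rewrite -ltnNge in small_gt.
  split; [exact: (weight_lower_slope g_i) | exact: (franklin_lower_slope g_i) |].
  by move=> e; have := lower_slope_neq g_i weight_g small_gt not_pent; rewrite e eqxx.
Qed.

Lemma odd_card_involution_fixpoint (T : finType) (f : T -> T) (A : {set T}) :
  {in A, forall x, f x \in A} -> {in A, forall x, f (f x) = x} ->
  odd #|A| -> exists2 x, x \in A & f x = x.
Proof.
have [n cardA] : {n | #|A| = n} by exists #|A|.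
rewrite cardA; elim/ltn_ind: n A cardA => n IH A cardA fA ffA oddA.
have [x xA] : exists x, x \in A.
  by apply/card_gt0P; rewrite cardA; case: n oddA {IH cardA}.
have [fx_x|fx_x] := eqVneq (f x) x; first by exists x.
pose B := A :\ x :\ f x.
have cardB : #|A| = #|B|.+2.
  by rewrite (cardsD1 x A) xA (cardsD1 (f x) (A :\ x)) !inE fA // fx_x.
have fB : {in B, forall y, f y \in B}.
  move=> y; rewrite !inE => /and3P[y_fx y_x yA]; rewrite fA // andbT.
  apply/andP; split; apply/eqP => e.
    by move/eqP: y_x; apply; rewrite -(ffA y) // e ffA.
  by move/eqP: y_fx; apply; rewrite -e ffA.
have [y yB fy_y] : exists2 y, y \in B & f y = y.
  apply: (IH #|B|) => //; first lia.
    by move=> y; rewrite !inE => /and3P[_ _ /ffA].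
  by move: oddA; rewrite -cardA cardB /= negbK.
by exists y => //; move: yB; rewrite !inE => /and3P[].
Qed.

Lemma odd_card_dpart_pentagonal N :
  odd #|[set g : {ffun 'I_N -> bool} | weight g == N]| -> exists m, 24 * N + 1 = m ^ 2.
Proof.
set S := [set g | _]; move=> odd_card.
have [g] : exists2 g, g \in S & franklin g = g.
  apply: (odd_card_involution_fixpoint (f := @franklin N) _ _ odd_card) => g.
    by rewrite !inE => /eqP /franklinP[-> _ _].
  by rewrite inE => /eqP /franklinP[_ -> _].
by rewrite inE => /eqP /franklinP[_ _].
Qed.

Import GRing.Theory.


Section TruncatedSeries.

Variables (R : comNzRingType) (N : nat).
Local Open Scope ring_scope.

Definition agree_upto (a b : {poly R}) := forall k, (k <= N)%N -> a`_k = b`_k.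

Lemma agree_sym a b : agree_upto a b -> agree_upto b a.
Proof. by move=> ab k kN; rewrite ab. Qed.

Lemma agree_trans a b c : agree_upto a b -> agree_upto b c -> agree_upto a c.
Proof. by move=> ab bc k kN; rewrite ab ?bc. Qed.

Lemma agreeD a a' b b' :
  agree_upto a a' -> agree_upto b b' -> agree_upto (a + b) (a' + b').
Proof. by move=> aa bb k kN; rewrite !coefD aa ?bb. Qed.

Lemma agreeB a a' b b' :
  agree_upto a a' -> agree_upto b b' -> agree_upto (a - b) (a' - b').
Proof. by move=> aa bb k kN; rewrite !coefB aa ?bb. Qed.

Lemma agreeM a a' b b' :
  agree_upto a a' -> agree_upto b b' -> agree_upto (a * b) (a' * b').
Proof.
move=> aa bb k kN; rewrite !coefM; apply: eq_bigr => j _.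
by rewrite aa ?bb //; have := ltn_ord j; lia.
Qed.

Lemma agree_prod (I : Type) (r : seq I) (P : pred I) (F G : I -> {poly R}) :
  (forall i, P i -> agree_upto (F i) (G i)) ->
  agree_upto (\prod_(i <- r | P i) F i) (\prod_(i <- r | P i) G i).
Proof. by move=> FG; apply: (big_ind2 agree_upto) => //; apply: agreeM. Qed.

Lemma agree_prod1 (I : Type) (r : seq I) (P : pred I) (F : I -> {poly R}) :
  (forall i, P i -> agree_upto (F i) 1) -> agree_upto (\prod_(i <- r | P i) F i) 1.
Proof. by move=> F1; have := @agree_prod _ r P F (fun=> 1) F1; rewrite big1_eq. Qed.

Lemma agree_mulr1 a b : agree_upto b 1 -> agree_upto (a * b) a.
Proof. by move=> b1; rewrite -[X in agree_upto _ X]mulr1; apply: agreeM. Qed.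

Lemma agree_Xn0 k : (N < k)%N -> agree_upto 'X^k 0.
Proof. by move=> Nk j jN; rewrite coefXn coef0; case: eqP => // jk; lia. Qed.

Lemma agree_1subXn k : (N < k)%N -> agree_upto (1 - 'X^k) 1.
Proof.
by move=> Nk; rewrite -[X in agree_upto _ X]subr0; apply: agreeB => //; apply: agree_Xn0.
Qed.

Lemma agree_Xn_add1 k : (N < k)%N -> agree_upto ('X^k + 1) 1.
Proof.
by move=> Nk; rewrite -[X in agree_upto _ X]add0r; apply: agreeD => //; apply: agree_Xn0.
Qed.

Lemma agree_prod_double (G : nat -> {poly R}) :
  (forall i, (N <= i)%N -> agree_upto (G i) 1) ->
  agree_upto (\prod_(i < N) G i) (\prod_(i < N.*2) G i).
Proof.
move=> G1; rewrite -addnn big_split_ord /=; apply: agree_sym; apply: agree_mulr1.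
by apply: agree_prod1 => i _; apply: G1; lia.
Qed.

End TruncatedSeries.

Section Glaisher.

Variables (R : comNzRingType) (N : nat).
Local Open Scope ring_scope.
Local Notation agree := (agree_upto N).

Definition geom (p : nat) : {poly R} := \sum_(m < N.+1) 'X^(p * m).

Lemma geom_partial_mul p n :
  (\sum_(m < n) 'X^(p * m)) * (1 - 'X^p) = 1 - 'X^(p * n) :> {poly R}.
Proof.
elim: n => [|n IH]; first by rewrite big_ord0 mul0r muln0 expr0 subrr.
by rewrite big_ord_recr /= mulrDl IH mulnS exprD; ring.
Qed.

Lemma geom_mul_1subXn p : (0 < p)%N -> agree (geom p * (1 - 'X^p)) 1.
Proof. by move=> p_gt0; rewrite geom_partial_mul; apply: agree_1subXn; nia. Qed.

Lemma geom_large p : (N < p)%N -> agree (geom p) 1.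
Proof.
move=> Np k kN; rewrite coef_sum big_ord_recl /= muln0 coefXn big1 ?addr0 // => i _.
by rewrite coefXn; case: eqP => // e; move: e; rewrite /bump /=; nia.
Qed.

(* Both factors have the shape of [coef_prod_sum_count], so that the
   coefficients of their products count exactly the sets in [b] and [weight]. *)
Definition no_even_factor (i : nat) : {poly R} :=
  \sum_(m < N.+1) (((2 %| i.+1)%N ==> (val m == 0%N)) : nat)%:R * 'X^(i.+1 * m).

Definition distinct_factor (i : nat) : {poly R} :=
  \sum_(c : bool) (true : nat)%:R * 'X^(i.+1 * c).

Lemma no_even_factor_odd i : ~~ (2 %| i.+1)%N -> no_even_factor i = geom i.+1.
Proof. by move=> odd_i; apply: eq_bigr => m _; rewrite (negbTE odd_i) mul1r. Qed.

Lemma no_even_factor_even i : (2 %| i.+1)%N -> no_even_factor i = 1.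
Proof.
move=> even_i; rewrite /no_even_factor big_ord_recl even_i muln0 expr0 mul1r.
by rewrite big1 ?addr0 // => m _; rewrite mul0r.
Qed.

Lemma distinct_factorE i : distinct_factor i = 'X^(i.+1) + 1.
Proof. by rewrite /distinct_factor big_bool /= !mul1r muln1 muln0 expr0. Qed.

Lemma no_even_factor_large i : (N <= i)%N -> agree (no_even_factor i) 1.
Proof.
move=> Ni; case: (boolP (2 %| i.+1)%N) => [/no_even_factor_even -> //|].
by move/no_even_factor_odd ->; apply: geom_large; lia.
Qed.

Lemma prod_pairs (G : nat -> {poly R}) n :
  \prod_(i < n.*2) G i = \prod_(j < n) (G j.*2 * G j.*2.+1).
Proof.
elim: n => [|n IH]; first by rewrite !big_ord0.
by rewrite doubleS !big_ord_recr /= IH mulrA.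
Qed.

Local Notation odd_geoms := (\prod_(j < N) geom j.*2.+1 : {poly R}).
Local Notation odd_1subX := (\prod_(j < N) (1 - 'X^(j.*2.+1)) : {poly R}).
Local Notation distinct_prod := (\prod_(i < N.*2) ('X^(i.+1) + 1) : {poly R}).

Lemma prod_no_even_factor : agree (\prod_(i < N) no_even_factor i) odd_geoms.
Proof.
apply: agree_trans (agree_prod_double no_even_factor_large) _; rewrite prod_pairs.
apply: agree_prod => j _; rewrite no_even_factor_odd ?no_even_factor_even ?mulr1 //.
  by rewrite dvdn2 /= negbK odd_double.
by rewrite dvdn2 /= odd_double.
Qed.

Lemma prod_distinct_factor : agree (\prod_(i < N) distinct_factor i) distinct_prod.
Proof.
apply: agree_trans (agree_prod_double (G := distinct_factor) _) _.
  by move=> i Ni; rewrite distinct_factorE; apply: agree_Xn_add1; lia.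
by apply: agree_prod => i _; rewrite distinct_factorE.
Qed.

Lemma odd_geoms_inverse : agree (odd_geoms * odd_1subX) 1.
Proof. by rewrite -big_split; apply: agree_prod1 => j _; apply: geom_mul_1subXn. Qed.

(* Euler: (1 + x^k) (1 - x^k) = 1 - x^(2k), and the even factors cancel. *)
Lemma distinct_prod_inverse : agree (distinct_prod * odd_1subX) 1.
Proof.
pose even_1subX : {poly R} := \prod_(j < N) (1 - 'X^(j.*2.+2)).
have even_inverse : agree (even_1subX * \prod_(j < N) geom j.*2.+2) 1.
  rewrite -big_split /=; apply: agree_prod1 => j _.
  by rewrite mulrC; apply: geom_mul_1subXn.
have all_1subX : odd_1subX * even_1subX = \prod_(i < N.*2) (1 - 'X^(i.+1)).
  by rewrite (prod_pairs (fun i => 1 - 'X^(i.+1))) -big_split.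
have cancel_even : agree (distinct_prod * (odd_1subX * even_1subX)) even_1subX.
  rewrite all_1subX -big_split /=.
  rewrite (eq_bigr (fun i : 'I_N.*2 => 1 - 'X^((i : nat).+1.*2))); last first.
    by move=> i _; rewrite -[(i : nat).+1.*2]addnn exprD; ring.
  apply: agree_sym.
  apply: agree_trans (agree_prod_double (G := fun i => 1 - 'X^(i.+1.*2)) _).
    by apply: agree_prod => j _; rewrite doubleS.
  by move=> i Ni; apply: agree_1subXn; lia.
apply: agree_trans (agree_sym (agree_mulr1 _ even_inverse)) _.
rewrite !mulrA -(mulrA distinct_prod).
exact: agree_trans (agreeM cancel_even (fun _ _ => erefl)) even_inverse.
Qed.

Lemma glaisher_series :
  agree (\prod_(i < N) no_even_factor i) (\prod_(i < N) distinct_factor i).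
Proof.
apply: agree_trans prod_no_even_factor _; apply: agree_sym.
apply: agree_trans prod_distinct_factor _.
apply: agree_trans (agree_sym (agree_mulr1 _ odd_geoms_inverse)) _.
rewrite mulrCA; exact: agree_mulr1 distinct_prod_inverse.
Qed.

End Glaisher.

Section CoefCount.

Variables (R : comNzRingType) (N : nat).
Local Open Scope ring_scope.

Lemma prod_bool_nat (I : finType) (b : I -> bool) :
  (\prod_(i : I) (b i : nat))%N = [forall i, b i].
Proof.
have [/forallP b_all|/forallPn[i /negbTE b_i]] := boolP [forall i, b i].
  by rewrite big1 // => i _; rewrite b_all.
by rewrite (bigD1 i) //= b_i.
Qed.

Lemma coef_prod_sum_count (J : finType) (w : 'I_N -> J -> nat) (a : 'I_N -> J -> bool) :
  (\prod_(i < N) \sum_(j : J) ((a i j : nat)%:R * 'X^(w i j)) : {poly R})`_N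
  = #|[set f : {ffun 'I_N -> J} |
        [forall i, a i (f i)] && ((\sum_(i < N) w i (f i))%N == N)]|%:R.
Proof.
rewrite bigA_distr_bigA coef_sum -sum1_card natr_sum [RHS]big_mkcond /=.
apply: eq_bigr => f _; rewrite inE big_split /= prodrXr -natr_prod prod_bool_nat.
by rewrite mulr_natl coefMn coefXn eq_sym; case: [forall i, _]; case: (_ == _).
Qed.

End CoefCount.

Lemma b2_card_distinct N : b 2 N = #|[set g : {ffun 'I_N -> bool} | weight g == N]|.
Proof.
have := @glaisher_series int N N (leqnn N).
rewrite (coef_prod_sum_count _ (fun i (m : 'I_N.+1) => i.+1 * m)
                             (fun i m => (2 %| i.+1) ==> (val m == 0))).
rewrite (coef_prod_sum_count _ (fun i (c : bool) => i.+1 * c) (fun _ _ => true)).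
rewrite !natz => -[] same_card.
rewrite /b; apply: etrans (etrans (eq_card _) same_card) (eq_card _) => g.
  by rewrite !inE /is_partition_mult andbC.
by rewrite !inE /weight; apply: andb_idl => _; apply/forallP.
Qed.

Lemma sqr_mod24 q : q %% 2 != 0 -> q %% 3 != 0 -> q ^ 2 = 1 %[mod 24].
Proof.
rewrite -modnXm -[q %% 2](@modn_dvdm 24) // -[q %% 3](@modn_dvdm 24) //.
have : q %% 24 < 24 by rewrite ltn_pmod.
by move: (q %% 24); do 24?[case=> //].
Qed.

Lemma prime_sqr_mod24 q : prime q -> 5 <= q -> q ^ 2 = 1 %[mod 24].
Proof.
move=> q_prime q_ge5.
have small_ndvd d : prime d -> d < 5 -> q %% d != 0.
  by move=> d_prime d_lt5; rewrite -/(d %| q) dvdn_prime2 //; apply/eqP; lia.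
exact: sqr_mod24 (small_ndvd 2 _ _) (small_ndvd 3 _ _).
Qed.

Lemma square_cofactor Q X m : 0 < Q -> m ^ 2 = Q ^ 2 * X -> exists k, X = k ^ 2.
Proof.
move=> Q_gt0 mQX; have : Q ^ 2 %| m ^ 2 by rewrite mQX dvdn_mulr.
rewrite dvdn_pexp2r // => /dvdnP[k mkQ]; exists k; apply/eqP.
have Q2_gt0 : 0 < Q ^ 2 by rewrite expn_gt0 Q_gt0.
by rewrite -(eqn_pmul2l Q2_gt0) -mQX mkQ expnMn mulnC.
Qed.

Lemma legendre_sqr_neq a p k : 0 < p -> k ^ 2 = a %[mod p] -> legendre a p != (-1)%R.
Proof.
move=> p_gt0 ka; rewrite /legendre; case: ifP => // _.
suff -> : [exists x : 'I_p, x ^ 2 %% p == a %% p] by [].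
by apply/existsP; exists (Ordinal (ltn_pmod k p_gt0)); rewrite /= modnXm ka.
Qed.

Lemma pentagonal_disc_factor P q n j : P = 1 %[mod 24] ->
  24 * (P * q * n + ((24 * j + 1) * P - 1) %/ 24) + 1 = P * (24 * n * q + (24 * j + 1)).
Proof.
move=> P1; have PK := divn_eq P 24; rewrite P1 /= in PK.
have -> : (24 * j + 1) * P - 1 = (j * P + P %/ 24) * 24 by rewrite {1}PK; nia.
by rewrite mulnK //; rewrite {1 3}PK; nia.
Qed.

Lemma prod_sqr_mod24 (p : nat -> nat) r :
  (forall s, 1 <= s < r -> prime (p s) /\ 5 <= p s) ->
  \prod_(1 <= s < r) p s ^ 2 = 1 %[mod 24].
Proof.
move=> p_prime; rewrite big_seq; apply: (big_ind (fun x => x = 1 %[mod 24])) => //.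
  by move=> x y x1 y1; rewrite -modnMm x1 y1.
move=> s; rewrite mem_index_iota => s_range.
by have [] := p_prime s s_range; apply: prime_sqr_mod24.
Qed.

Theorem theorem3p7 (r : nat) (p : nat -> nat) :
  1 <= r ->
  (forall s, 1 <= s <= r -> prime (p s) /\ 5 <= p s) ->
  forall n j : nat, j <= p r - 1 ->
  legendre (24 * j + 1) (p r) = (-1)%R ->
  let P := \prod_(1 <= s < r) (p s) ^ 2 in
  b 2 (P * p r * n + ((24 * j + 1) * P - 1) %/ 24) = 0 %[mod 2].
Proof.
move=> r_gt0 p_prime n j _ legendre_neg P.
have [pr_prime _] : prime (p r) /\ 5 <= p r by apply: p_prime; lia.
have P1 : P = 1 %[mod 24] by apply: prod_sqr_mod24 => s s_range; apply: p_prime; lia.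
suff : ~~ odd (b 2 (P * p r * n + ((24 * j + 1) * P - 1) %/ 24)).
  by rewrite modn2 => /negbTE ->.
have P_sqr : P = (\prod_(1 <= s < r) p s) ^ 2.
  by rewrite /P -mulnn -big_split /=; apply: eq_bigr => s _; rewrite mulnn.
have Q_gt0 : 0 < \prod_(1 <= s < r) p s.
  rewrite big_seq; apply: prodn_cond_gt0 => s /[!mem_index_iota] s_range.
  by have [/prime_gt0] : prime (p s) /\ 5 <= p s by apply: p_prime; lia.
rewrite b2_card_distinct; apply/negP => /odd_card_dpart_pentagonal[m].
rewrite pentagonal_disc_factor // P_sqr => /esym /(square_cofactor Q_gt0)[k k_sqr].
have k_mod : k ^ 2 = 24 * j + 1 %[mod p r] by rewrite -k_sqr modnMDl.
by have := legendre_sqr_neq (prime_gt0 pr_prime) k_mod; rewrite legendre_neg.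
Qed.
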